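(* Let $(\lambda_i)_{i\ge1}$ and $(\mu_i)_{i\ge1}$ be elements of a commutative ring. Let $k\ge0$ and $0\le\delta\le k$ with $k-\delta$ even, and put $j=(k-\delta)/2$ and $M=(k+\delta)/2$. Then $$\sum_{P\in\mathcal{D}(k,0,\delta)}\mathrm{wt}(P)=\Big(\prod_{i=1}^{\delta}\lambda_i\Big)\sum_{\substack{m_1\le m_2\le\cdots\le m_j\le M\\ m_i\ge i\ (1\le i\le j)}}\ \prod_{i=1}^{j}\lambda_{m_i-i+1}\,\mu_{m_i-i+1},$$ where the sum on the right is over integer tuples $(m_1,\dots,m_j)$ and equals $1$ when $j=0$. Equivalently, the right-hand side is the nested sum $$\prod_{i=1}^{\delta}\lambda_i\sum_{m_j=j}^{M}\lambda_{m_j-j+1}\mu_{m_j-j+1}\Big[\cdots\Big[\sum_{m_2=2}^{m_3}\lambda_{m_2-1}\mu_{m_2-1}\Big[\sum_{m_1=1}^{m_2}\lambda_{m_1}\mu_{m_1}\Big]\Big]\cdots\Big].$$ In particular for $\delta=0$ (so $k$ even, $j=M=k/2$) the sum of weights of all paths in $\mathcal{D}(k,0,0)$ is the nested sum with all upper bounds $k/2$ and no prefactor.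
   Context: $\mathcal{D}(k,\delta_1,\delta_2)$ is the set of lattice paths of $k$ steps, each step $U=(1,1)$ or $D=(1,-1)$, from $(0,\delta_1)$ to $(k,\delta_2)$, never going below the $x$-axis. The weight $\mathrm{wt}(P)$ of a path is the product over its steps of $\lambda_i$ for each up step from height $i-1$ to height $i$ and $\mu_i$ for each down step from height $i$ to height $i-1$. *)

From HB Require Import structures.
From mathcomp Require Import all_boot all_order all_algebra.
Set Implicit Arguments. Unset Strict Implicit. Unset Printing Implicit Defensive.
Import Order.TTheory GRing.Theory Num.Theory.

(* A lattice path is a sequence of steps: true = U = (1,1), false = D = (1,-1). *)

Fixpoint valid_path (h : nat) (s : seq bool) : bool :=
  match s with
  | [::] => true
  | true :: s' => valid_path h.+1 s'
  | false :: s' => (0 < h) && valid_path h.-1 s'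
  end.

(* final height of a path started at height h (only meaningful for valid paths) *)
Fixpoint end_height (h : nat) (s : seq bool) : nat :=
  match s with
  | [::] => h
  | true :: s' => end_height h.+1 s'
  | false :: s' => end_height h.-1 s'
  end.

Local Open Scope ring_scope.

Fixpoint path_wt (R : comPzRingType) (lam mu : nat -> R) (h : nat) (s : seq bool) : R :=
  match s with
  | [::] => 1
  | true :: s' => lam h.+1 * path_wt lam mu h.+1 s'
  | false :: s' => mu h * path_wt lam mu h.-1 s'
  end.

Definition in_D (k d1 d2 : nat) (P : k.-tuple bool) : bool :=
  valid_path d1 P && (end_height d1 P == d2).

From HB Require Import structures.
From mathcomp Require Import all_boot all_order all_algebra zify ring.
Import Order.TTheory GRing.Theory Num.Theory.
Set Implicit Arguments. Unset Strict Implicit.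
Local Open Scope ring_scope.

(* Let W k d be the total weight of the paths of D(k, 0, d).  Splitting off the
   last step gives W (k+1) d = lam_d W k (d-1) + mu_(d+1) W k (d+1), and the
   closed form lam_1...lam_d T_j(j+d), with T the nested sum, obeys the same
   recursion because splitting off the largest value of the outermost index
   gives T_(j+1)(b+1) = T_(j+1)(b) + lam mu T_j(b+1).  On the other side,
   summing over the last entry of a nondecreasing tuple unfolds the tuple sum
   into the nested sum. *)

Section TupleRcons.
Variables (T : Type) (n : nat).
Implicit Types (t : n.-tuple T) (x : T).

Lemma tnth_rcons_widen t x (i : 'I_n) :
  tnth [tuple of rcons t x] (widen_ord (leqnSn n) i) = tnth t i.
Proof. by rewrite !(tnth_nth x) /= nth_rcons size_tuple ltn_ord. Qed.

Lemma tnth_rcons_max t x : tnth [tuple of rcons t x] ord_max = x.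
Proof. by rewrite (tnth_nth x) /= nth_rcons size_tuple ltnn eqxx. Qed.

Lemma big_ord_tnth_rcons (R : Type) (idx : R) (op : Monoid.law idx)
    (F : nat -> T -> R) t x :
  \big[op/idx]_(i < n.+1) F i (tnth [tuple of rcons t x] i) =
  op (\big[op/idx]_(i < n) F i (tnth t i)) (F n x).
Proof.
rewrite big_ord_recr /= tnth_rcons_max; congr (op _ _).
by apply: eq_bigr => i _; rewrite tnth_rcons_widen.
Qed.

Lemma forall_ord_tnth_rcons (P : nat -> T -> bool) t x :
  [forall i : 'I_n.+1, P i (tnth [tuple of rcons t x] i)] =
  [forall i : 'I_n, P i (tnth t i)] && P n x.
Proof.
have andE m (Q : pred 'I_m) : [forall i, Q i] = \big[andb/true]_i Q i.
  by rewrite big_andE.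
by rewrite !andE (big_ord_tnth_rcons andb).
Qed.

End TupleRcons.

Lemma big_tuple_rcons (R : Type) (idx : R) (op : Monoid.com_law idx)
    (T : finType) n (P : pred (n.+1.-tuple T)) (F : n.+1.-tuple T -> R) :
  \big[op/idx]_(t | P t) F t =
  \big[op/idx]_(x : T) \big[op/idx]_(t : n.-tuple T | P [tuple of rcons t x])
    F [tuple of rcons t x].
Proof.
rewrite pair_big_dep /=.
rewrite (reindex (fun p : T * n.-tuple T => [tuple of rcons p.2 p.1])) //=.
exists (fun u : n.+1.-tuple T =>
  (tnth u ord_max, tcast (minn_idPl (leqnSn n)) [tuple of take n u])).
  move=> [x t] _ /=; rewrite tnth_rcons_max; congr pair; apply: val_inj.
  by rewrite /= val_tcast /= -cats1 take_size_cat ?size_tuple.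
move=> u _; apply: val_inj; rewrite /= val_tcast /=.
rewrite (tnth_nth (tnth u ord_max)) -take_nth ?size_tuple //.
by rewrite take_oversize ?size_tuple.
Qed.

Lemma sorted_leq_rcons s x :
  sorted leq (rcons s x) = sorted leq s && all (leq^~ x) s.
Proof.
rewrite -[rcons s x]revK rev_rcons rev_sorted /= path_sortedE.
  by rewrite all_rev -rev_sorted revK andbC.
by move=> a b c /= ba cb; apply: leq_trans ba.
Qed.

Lemma valid_path_rcons h s b :
  valid_path h (rcons s b) = valid_path h s && (b || (0 < end_height h s)%N).
Proof. by elim: s h => [|[] s IH] h /=; rewrite ?IH ?andbT ?andbA // orbT. Qed.

Lemma end_height_rcons h s b :
  end_height h (rcons s b) = if b then (end_height h s).+1 else (end_height h s).-1.
Proof. by elim: s h => [|[] s IH] h /=. Qed.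

Lemma path_wt_rcons (R : comPzRingType) (lam mu : nat -> R) h s b :
  path_wt lam mu h (rcons s b) =
  path_wt lam mu h s * (if b then lam (end_height h s).+1 else mu (end_height h s)).
Proof. by elim: s h => [|[] s IH] h /=; rewrite ?mul1r ?mulr1 ?IH ?mulrA. Qed.

Section PathsWeight.
Variables (R : comPzRingType) (lam mu : nat -> R).

Definition D_weight k d := \sum_(P : k.-tuple bool | in_D 0 d P) path_wt lam mu 0 P.

Lemma D_weight0 d : D_weight 0 d = (d == 0)%:R.
Proof.
rewrite /D_weight; case: d => [|d].
  by rewrite (big_pred1 [tuple]) // => t; rewrite tuple0.
by rewrite big_pred0 // => t; rewrite tuple0.
Qed.

Lemma D_weight_rcons_up k d :
  \sum_(t : k.-tuple bool | in_D 0 d [tuple of rcons t true])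
    path_wt lam mu 0 (rcons t true) =
  if d is d'.+1 then D_weight k d' * lam d else 0.
Proof.
case: d => [|d].
  by rewrite big_pred0 // => t; rewrite /in_D end_height_rcons andbF.
rewrite /D_weight big_distrl; symmetry.
apply: eq_big => [t|t /andP[_ /eqP end_t]].
  by rewrite /in_D valid_path_rcons end_height_rcons eqSS andbT.
by rewrite path_wt_rcons end_t.
Qed.

Lemma D_weight_rcons_down k d :
  \sum_(t : k.-tuple bool | in_D 0 d [tuple of rcons t false])
    path_wt lam mu 0 (rcons t false) = D_weight k d.+1 * mu d.+1.
Proof.
rewrite /D_weight big_distrl; symmetry.
apply: eq_big => [t|t /andP[_ /eqP end_t]].
  rewrite /in_D valid_path_rcons end_height_rcons /= -andbA.
  by case: (end_height 0 t).
by rewrite path_wt_rcons end_t.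
Qed.

Lemma D_weightS k d :
  D_weight k.+1 d =
  (if d is d'.+1 then lam d * D_weight k d' else 0) + mu d.+1 * D_weight k d.+1.
Proof.
rewrite {1}/D_weight big_tuple_rcons big_bool /=.
rewrite D_weight_rcons_up D_weight_rcons_down [_ * mu _]mulrC.
by case: d => [|d]; rewrite // [_ * lam _]mulrC.
Qed.

Lemma D_weight_gt k d : (k < d)%N -> D_weight k d = 0.
Proof.
elim: k d => [|k IH] [|d] // lt_kd; first by rewrite D_weight0.
by rewrite D_weightS !IH ?mulr0 ?addr0 //; lia.
Qed.

Fixpoint nested_sum n b :=
  if n is n'.+1 then
    \sum_(n'.+1 <= m < b.+1) lam (m - n') * mu (m - n') * nested_sum n' m
  else 1.

Lemma nested_sumS_recr n b : (n <= b)%N ->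
  nested_sum n.+1 b.+1 =
  nested_sum n.+1 b + lam (b.+1 - n) * mu (b.+1 - n) * nested_sum n b.+1.
Proof. by move=> le_nb; rewrite /= big_nat_recr. Qed.

Lemma nested_sumS_lt n b : (b <= n)%N -> nested_sum n.+1 b = 0.
Proof. by move=> le_bn; rewrite /= big_geq. Qed.

Definition lam_prod d := \prod_(1 <= i < d.+1) lam i.

Lemma lam_prodS d : lam_prod d.+1 = lam_prod d * lam d.+1.
Proof. by rewrite /lam_prod big_nat_recr. Qed.

Lemma D_weight_closed j d :
  D_weight (j.*2 + d) d = lam_prod d * nested_sum j (j + d).
Proof.
suff: forall k j d, k = (j.*2 + d)%N ->
  D_weight k d = lam_prod d * nested_sum j (j + d) by apply.
elim=> [|k IH] {}j {}d k_eq.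
  have [-> ->] : j = 0%N /\ d = 0%N by lia.
  by rewrite D_weight0 /lam_prod big_geq // mulr1.
rewrite D_weightS; case: d k_eq => [|d] k_eq.
  case: j k_eq => [|j] k_eq; first by lia.
  rewrite add0r (IH j 1%N); last by lia.
  rewrite !addn0 nested_sumS_recr // nested_sumS_lt // subSnn.
  rewrite lam_prodS /lam_prod big_geq // addn1; ring.
rewrite (IH j d); last by lia.
case: j k_eq => [|j] k_eq.
  rewrite D_weight_gt; last by lia.
  by rewrite /= lam_prodS; ring.
rewrite (IH j d.+2); last by lia.
rewrite [(j.+1 + d.+1)%N]addnS nested_sumS_recr; last by lia.
have -> : ((j.+1 + d).+1 - j = d.+2)%N by lia.
have -> : ((j.+1 + d).+1 = j + d.+2)%N by lia.
rewrite !lam_prodS; ring.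
Qed.

End PathsWeight.

Section NestedTuples.
Variables (R : comPzRingType) (lam mu : nat -> R) (N : nat).

(* The bound [b] on the entries makes the recursion close up: dropping the
   last entry [x] of an admissible tuple leaves one admissible for [x]. *)
Definition admissible n b (m : n.-tuple 'I_N) :=
  [&& sorted leq (map (@nat_of_ord N) m), [forall i : 'I_n, (i < tnth m i)%N]
    & all (leq^~ b) (map (@nat_of_ord N) m)].

Definition tuple_weight n (m : n.-tuple 'I_N) :=
  \prod_(i < n) (lam (tnth m i - i) * mu (tnth m i - i)).

Lemma admissible_rcons n b (t : n.-tuple 'I_N) (x : 'I_N) :
  admissible b [tuple of rcons t x] = admissible x t && (n < x <= b)%N.
Proof.
rewrite /admissible /= map_rcons sorted_leq_rcons all_rcons.
rewrite (forall_ord_tnth_rcons (fun i (v : 'I_N) => i < v)%N).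
case: (leqP x b) => [le_xb|_]; last by rewrite !andbF.
have le_b : all (leq^~ x) (map (@nat_of_ord N) t) ->
            all (leq^~ b) (map (@nat_of_ord N) t).
  by apply: sub_all => v le_vx; apply: leq_trans le_xb.
case: (all (leq^~ x) _) le_b => [-> //|_]; last by rewrite !andbF.
by case: (sorted _ _); case: [forall _, _]; case: (n < x)%N.
Qed.

Lemma tuple_weight_rcons n (t : n.-tuple 'I_N) (x : 'I_N) :
  tuple_weight [tuple of rcons t x] = tuple_weight t * (lam (x - n) * mu (x - n)).
Proof.
exact: (big_ord_tnth_rcons _ (fun i (v : 'I_N) => lam (v - i) * mu (v - i))).
Qed.

Lemma sum_admissible_nested_sum n b : (b < N)%N ->
  \sum_(m : n.-tuple 'I_N | admissible b m) tuple_weight m = nested_sum lam mu n b.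
Proof.
elim: n b => [|n IH] b lt_bN.
  rewrite (big_pred1 [tuple]) ?[LHS]big_ord0 // => t.
  by rewrite (tuple0 t) /admissible /= andbT [RHS]eqxx; apply/forallP => -[].
have sum_last (x : 'I_N) :
  \sum_(t : n.-tuple 'I_N | admissible b [tuple of rcons t x])
     tuple_weight [tuple of rcons t x] =
  if (n < x <= b)%N then lam (x - n) * mu (x - n) * nested_sum lam mu n x else 0.
  rewrite -IH //; case: ifP => range_x.
    rewrite mulr_sumr; apply: eq_big => t.
      by rewrite admissible_rcons range_x andbT.
    by rewrite tuple_weight_rcons mulrC.
  by rewrite big_pred0 // => t; rewrite admissible_rcons range_x andbF.
rewrite big_tuple_rcons (eq_bigr _ (fun x _ => sum_last x)) -big_mkcond /=.
rewrite (big_nat_widen _ _ _ _ _ lt_bN) big_geq_mkord.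
by apply: eq_bigl => x; rewrite andbC.
Qed.

End NestedTuples.

Theorem mainTheorem5 (R : comPzRingType) (lam mu : nat -> R) (k delta : nat) :
  (delta <= k)%N -> ~~ odd (k - delta) ->
  let j := ((k - delta)./2)%N in
  let M := ((k + delta)./2)%N in
  \sum_(P : k.-tuple bool | in_D 0 delta P) path_wt lam mu 0 P
  = (\prod_(1 <= i < delta.+1) lam i) *
    \sum_(m : j.-tuple 'I_M.+1 |
            sorted leq (map (@nat_of_ord M.+1) m) &&
            [forall i : 'I_j, (i < tnth m i)%N])
       \prod_(i < j) (lam (tnth m i - i)%N * mu (tnth m i - i)%N).
Proof.
move=> le_dk even_kd j M.
have k_eq : k = (j.*2 + delta)%N by rewrite /j; lia.
have M_eq : M = (j + delta)%N by rewrite /M /j; lia.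
rewrite -/(D_weight lam mu k delta) k_eq D_weight_closed -M_eq.
rewrite -(sum_admissible_nested_sum lam mu j (ltnSn M)).
congr (_ * _); apply: eq_bigl => m.
have bounded : all (leq^~ M) (map (@nat_of_ord M.+1) m).
  by apply/allP => v /mapP[y _ ->]; rewrite -ltnS.
by rewrite /admissible bounded andbT.
Qed.
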